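(* For every $\gamma\in\mathbb R$ there exists a solution $(X,Y,Z,W)$ of system (S), defined on an interval containing $(-\infty,0]$, such that: (1) $Y(t)>0$ for all $t$; (2) $e^{-2t}|(X,Z,W)(t)-(0,1,0)|$ is bounded as $t\to-\infty$; (3) $e^{-t}|Y(t)|$ is bounded as $t\to-\infty$; (4) $\lim_{t\to-\infty}W/Y^2=1$; (5) $\lim_{t\to-\infty}(1-Z)/Y^2=\gamma$.
   Context: Fix a positive integer $d$ and $q\in\mathbb R$. Put $A_2=d(d+2)$ and $A_3=\tfrac14d(d+2)^2q^2$. System (S) is $$X'=X(dX^2+Z^2-1)+\tfrac{A_2}{d}Y^2-2\tfrac{A_3}{d}W^2,\qquad Y'=Y(dX^2+Z^2-X),$$ $$Z'=Z(dX^2+Z^2-1)+A_3W^2,\qquad W'=W(dX^2+Z^2-2X+Z).$$ *)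

From Stdlib Require Import Reals Lra.
Open Scope R_scope.

Definition A2 (d : nat) : R := INR d * (INR d + 2).
Definition A3 (d : nat) (q : R) : R := / 4 * INR d * (INR d + 2) ^ 2 * q ^ 2.

Definition FX (d : nat) (q X Y Z W : R) : R :=
  X * (INR d * X ^ 2 + Z ^ 2 - 1) + A2 d / INR d * Y ^ 2 - 2 * (A3 d q / INR d) * W ^ 2.
Definition FY (d : nat) (X Y Z : R) : R := Y * (INR d * X ^ 2 + Z ^ 2 - X).
Definition FZ (d : nat) (q X Z W : R) : R :=
  Z * (INR d * X ^ 2 + Z ^ 2 - 1) + A3 d q * W ^ 2.
Definition FW (d : nat) (X Z W : R) : R := W * (INR d * X ^ 2 + Z ^ 2 - 2 * X + Z).

Definition solves_S (d : nat) (q T : R) (X Y Z W : R -> R) : Prop :=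
  forall t, t < T ->
    derivable_pt_lim X t (FX d q (X t) (Y t) (Z t) (W t)) /\
    derivable_pt_lim Y t (FY d (X t) (Y t) (Z t)) /\
    derivable_pt_lim Z t (FZ d q (X t) (Z t) (W t)) /\
    derivable_pt_lim W t (FW d (X t) (Z t) (W t)).

Definition bounded_at_minus_infty (f : R -> R) : Prop :=
  exists C t0, forall t, t <= t0 -> Rabs (f t) <= C.

Definition limit_at_minus_infty (f : R -> R) (l : R) : Prop :=
  forall eps, 0 < eps -> exists M, forall t, t <= M -> Rabs (f t - l) < eps.

(* Writing Z = 1 + z, the point (X, Y, z, W) = 0 is an equilibrium whose linearisation has
   eigenvalues 0, 1, 2, 2.  We look for the solution as a power series in r = c e^t with
   Y = r + O(r^2), z = -gamma r^2 + O(r^3), W = r^2 + O(r^3) and X = O(r^2).  Since d/dt acts as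
   k on r^k, matching coefficients gives (k - lambda) a_k = (polynomial in the a_i, 0 < i < k);
   the resonant indices k = 1 (for Y) and k = 2 (for z, W) are exactly where the free data
   Y_1 = 1, z_2 = -gamma, W_2 = 1 enter.  Majorizing the coefficients by a M^k / (k+1)^2, a
   class stable under Cauchy products up to a factor 8, an induction shows convergence for
   |r| < 1/M; the leading terms then give all the stated asymptotics as t -> -oo. *)

From Stdlib Require Import Reals Lra Lia Psatz.
From Coquelicot Require Import Coquelicot.
Open Scope R_scope.

(** * A majorant stable under convolution *)

Lemma sum_f_R0_rev (f : nat -> R) (k : nat) :
  sum_f_R0 (fun i => f (k - i)%nat) k = sum_f_R0 f k.
Proof.
  induction k as [|k IH]; [reflexivity|].
  rewrite decomp_sum by lia. simpl pred.
  rewrite (sum_eq _ (fun i => f (k - i)%nat)) by reflexivity.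
  rewrite IH, tech5, Nat.sub_0_r. lra.
Qed.

Lemma sum_f_R0_scal_l (f : nat -> R) (c : R) (n : nat) :
  sum_f_R0 (fun i => c * f i) n = c * sum_f_R0 f n.
Proof. rewrite scal_sum. apply sum_eq. intros; ring. Qed.

Lemma sum_inv_sq_le (k : nat) :
  sum_f_R0 (fun i => / (INR i + 1) ^ 2) k <= 2 - / (INR k + 1).
Proof.
  induction k as [|k IH]; [simpl; lra|].
  rewrite tech5, S_INR.
  assert (hk : 0 <= INR k) by apply pos_INR.
  enough (/ (INR k + 1 + 1) ^ 2 + / (INR k + 1 + 1) <= / (INR k + 1)) by lra.
  apply Rmult_le_reg_r with ((INR k + 1) * (INR k + 1 + 1) ^ 2); [nra|].
  field_simplify; [nra|lra|lra].
Qed.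

Definition majorant (M : R) (k : nat) : R := M ^ k / (INR k + 1) ^ 2.

Lemma majorant_ge0 (M : R) (k : nat) : 0 <= M -> 0 <= majorant M k.
Proof.
  intros hM. unfold majorant. assert (0 <= INR k) by apply pos_INR.
  apply Rmult_le_pos; [apply pow_le; lra | left; apply Rinv_0_lt_compat, pow_lt; lra].
Qed.

Lemma majorant_le_pow (M : R) (k : nat) : 0 <= M -> majorant M k <= M ^ k.
Proof.
  intros hM. unfold majorant. assert (0 <= INR k) by apply pos_INR.
  assert (0 <= M ^ k) by (apply pow_le; lra).
  assert (1 <= (INR k + 1) ^ 2) by nra.
  apply Rmult_le_reg_r with ((INR k + 1) ^ 2); [lra|].
  field_simplify; nra.
Qed.

Lemma inv_sq_mul_le (a b : R) : 0 < a -> 0 < b ->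
  / (a ^ 2 * b ^ 2) <= 2 * (/ a ^ 2 + / b ^ 2) / (a + b) ^ 2.
Proof.
  intros ha hb.
  apply Rmult_le_reg_r with (a ^ 2 * b ^ 2 * (a + b) ^ 2); [repeat apply Rmult_lt_0_compat; nra|].
  replace (/ (a ^ 2 * b ^ 2) * (a ^ 2 * b ^ 2 * (a + b) ^ 2)) with ((a + b) ^ 2) by (field; lra).
  replace (2 * (/ a ^ 2 + / b ^ 2) / (a + b) ^ 2 * (a ^ 2 * b ^ 2 * (a + b) ^ 2))
    with (2 * (a ^ 2 + b ^ 2)) by (field; lra).
  assert (0 <= (a - b) ^ 2) by apply pow2_ge_0. nra.
Qed.

Lemma majorant_conv (M : R) (k : nat) : 0 <= M ->
  sum_f_R0 (fun i => majorant M i * majorant M (k - i)) k <= 8 * majorant M k.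
Proof.
  intros hM.
  assert (hk : 0 <= INR k) by apply pos_INR.
  set (c := M ^ k * (2 / (INR k + 2) ^ 2)).
  assert (hc : 0 <= c) by (unfold c; apply Rmult_le_pos; [apply pow_le; lra|];
    apply Rmult_le_pos; [lra| left; apply Rinv_0_lt_compat, pow_lt; lra]).
  apply Rle_trans with
    (sum_f_R0 (fun i => c * / (INR i + 1) ^ 2 + c * / (INR (k - i) + 1) ^ 2) k).
  { apply sum_Rle. intros i Hi.
    assert (0 <= INR i) by apply pos_INR.
    assert (0 <= INR (k - i)) by apply pos_INR.
    assert (E : majorant M i * majorant M (k - i)
                = M ^ k * / ((INR i + 1) ^ 2 * (INR (k - i) + 1) ^ 2)).
    { unfold majorant. replace k with (i + (k - i))%nat at 3 by lia.
      rewrite pow_add. field. lra. }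
    assert (T := inv_sq_mul_le (INR i + 1) (INR (k - i) + 1) ltac:(lra) ltac:(lra)).
    replace (INR i + 1 + (INR (k - i) + 1)) with (INR k + 2) in T
      by (rewrite minus_INR by lia; ring).
    rewrite E. unfold c.
    replace (M ^ k * (2 / (INR k + 2) ^ 2) * / (INR i + 1) ^ 2 +
             M ^ k * (2 / (INR k + 2) ^ 2) * / (INR (k - i) + 1) ^ 2)
      with (M ^ k * (2 * (/ (INR i + 1) ^ 2 + / (INR (k - i) + 1) ^ 2) / (INR k + 2) ^ 2))
      by (field; lra).
    apply Rmult_le_compat_l; [apply pow_le; lra | exact T]. }
  rewrite plus_sum, !sum_f_R0_scal_l, (sum_f_R0_rev (fun j => / (INR j + 1) ^ 2)).
  assert (h2 := sum_inv_sq_le k).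
  assert (0 <= / (INR k + 1)) by (left; apply Rinv_0_lt_compat; lra).
  apply Rle_trans with (4 * c); [nra|].
  unfold c, majorant.
  assert (0 <= M ^ k) by (apply pow_le; lra).
  assert (/ (INR k + 2) ^ 2 <= / (INR k + 1) ^ 2)
    by (apply Rinv_le_contravar; [nra| apply pow_incr; lra]).
  unfold Rdiv. nra.
Qed.

(** * Order, agreement and domination of coefficient sequences *)

Definition has_order (n : nat) (a : nat -> R) : Prop := forall i, (i < n)%nat -> a i = 0.

Definition agree_below (k : nat) (a b : nat -> R) : Prop := forall i, (i < k)%nat -> a i = b i.

Definition dominated_below (M : R) (k : nat) (A : R) (a : nat -> R) : Prop :=
  forall i, (i < k)%nat -> Rabs (a i) <= A * majorant M i.

Definition dominated (M A : R) (a : nat -> R) : Prop :=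
  forall i, Rabs (a i) <= A * majorant M i.

Definition majorized (M : R) (a : nat -> R) : Prop := exists A, 0 <= A /\ dominated M A a.

Lemma has_order_plus n a b : has_order n a -> has_order n b -> has_order n (PS_plus a b).
Proof. intros ha hb i hi. change (a i + b i = 0). rewrite ha, hb by exact hi. ring. Qed.

Lemma has_order_scal n c a : has_order n a -> has_order n (PS_scal c a).
Proof. intros ha i hi. change (c * a i = 0). rewrite ha by exact hi. ring. Qed.

Lemma has_order_mult m n k a b : (k <= m + n)%nat ->
  has_order m a -> has_order n b -> has_order k (PS_mult a b).
Proof.
  intros hk ha hb i hi. apply sum_eq_R0. intros j hj.
  destruct (Nat.lt_ge_cases j m) as [hjm | hjm].
  - rewrite ha by exact hjm. ring.
  - rewrite hb by lia. ring.
Qed.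

Lemma has_order_le m n a : (m <= n)%nat -> has_order n a -> has_order m a.
Proof. intros hmn ha i hi. apply ha. lia. Qed.

Lemma agree_below_plus k a b a' b' :
  agree_below k a a' -> agree_below k b b' -> agree_below k (PS_plus a b) (PS_plus a' b').
Proof. intros ha hb i hi. change (a i + b i = a' i + b' i). rewrite ha, hb; auto. Qed.

Lemma agree_below_scal k c a a' : agree_below k a a' -> agree_below k (PS_scal c a) (PS_scal c a').
Proof. intros ha i hi. change (c * a i = c * a' i). rewrite ha; auto. Qed.

Lemma agree_below_le k k' a a' : (k' <= k)%nat -> agree_below k a a' -> agree_below k' a a'.
Proof. intros hk ha i hi. apply ha. lia. Qed.

(* Constant terms vanish, so the [k]-th coefficient of a product only involves indices below [k]. *)
Lemma agree_below_mult k a b a' b' :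
  has_order 1 a -> has_order 1 b -> has_order 1 a' -> has_order 1 b' ->
  agree_below k a a' -> agree_below k b b' -> agree_below (S k) (PS_mult a b) (PS_mult a' b').
Proof.
  intros a0 b0 a'0 b'0 ha hb j hj. apply sum_eq. intros i hi.
  destruct (Nat.eq_dec i 0) as [->|n0]; [rewrite a0, a'0 by lia; ring|].
  destruct (Nat.eq_dec i j) as [->|n1]; [rewrite Nat.sub_diag, b0, b'0 by lia; ring|].
  rewrite ha, hb by lia. reflexivity.
Qed.

Lemma PS_mult_abs_le M A B a b k : 0 <= M -> 0 <= A * B ->
  (forall i, (i <= k)%nat -> Rabs (a i * b (k - i)%nat) <= A * B * (majorant M i * majorant M (k - i))) ->
  Rabs (PS_mult a b k) <= 8 * A * B * majorant M k.
Proof.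
  intros hM hAB H. unfold PS_mult.
  eapply Rle_trans; [apply sum_f_R0_triangle|].
  eapply Rle_trans; [apply sum_Rle; intros i hi; apply (H i hi)|].
  rewrite sum_f_R0_scal_l.
  replace (8 * A * B * majorant M k) with (A * B * (8 * majorant M k)) by ring.
  apply Rmult_le_compat_l; [lra | apply majorant_conv; lra].
Qed.

Lemma dominated_below_plus M k A B a b :
  dominated_below M k A a -> dominated_below M k B b -> dominated_below M k (A + B) (PS_plus a b).
Proof.
  intros ha hb i hi. change (Rabs (a i + b i) <= (A + B) * majorant M i).
  eapply Rle_trans; [apply Rabs_triang|]. specialize (ha i hi); specialize (hb i hi). lra.
Qed.

Lemma dominated_below_scal M k A c a :
  dominated_below M k A a -> dominated_below M k (Rabs c * A) (PS_scal c a).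
Proof.
  intros ha i hi. change (Rabs (c * a i) <= Rabs c * A * majorant M i).
  rewrite Rabs_mult, Rmult_assoc. apply Rmult_le_compat_l; [apply Rabs_pos | auto].
Qed.

Lemma dominated_below_mult M k A B a b : 0 <= M -> 0 <= A -> 0 <= B ->
  has_order 1 a -> has_order 1 b ->
  dominated_below M k A a -> dominated_below M k B b ->
  dominated_below M (S k) (8 * A * B) (PS_mult a b).
Proof.
  intros hM hA hB a0 b0 ha hb j hj.
  apply PS_mult_abs_le; [lra | nra |]. intros i hi.
  assert (hmm : 0 <= A * B * (majorant M i * majorant M (j - i)))
    by (apply Rmult_le_pos; [nra | apply Rmult_le_pos; apply majorant_ge0; lra]).
  destruct (Nat.eq_dec i 0) as [->|n0]; [rewrite a0, Rmult_0_l, Rabs_R0 by lia; exact hmm|].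
  destruct (Nat.eq_dec i j) as [->|n1].
  { rewrite Nat.sub_diag, b0, Rmult_0_r, Rabs_R0 in * by lia. exact hmm. }
  rewrite Rabs_mult.
  replace (A * B * (majorant M i * majorant M (j - i)))
    with ((A * majorant M i) * (B * majorant M (j - i))) by ring.
  apply Rmult_le_compat; try apply Rabs_pos; [apply ha | apply hb]; lia.
Qed.

Lemma dominated_below_weaken M k k' A A' a : 0 <= M -> (k' <= k)%nat -> A <= A' ->
  dominated_below M k A a -> dominated_below M k' A' a.
Proof.
  intros hM hk hA ha i hi. eapply Rle_trans; [apply ha; lia|].
  apply Rmult_le_compat_r; [apply majorant_ge0|]; lra.
Qed.

Lemma dominated_below_S M k A a :
  dominated_below M k A a -> Rabs (a k) <= A * majorant M k -> dominated_below M (S k) A a.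
Proof. intros ha hk i hi. destruct (Nat.eq_dec i k) as [->|n]; auto. apply ha. lia. Qed.

Lemma dominated_below_last M k A B a : 0 <= M ->
  dominated_below M (S k) A a -> A <= B -> Rabs (a k) <= B * majorant M k.
Proof.
  intros hM ha hAB. apply (dominated_below_weaken M (S k) (S k) A B a hM (le_n _) hAB ha). lia.
Qed.

Lemma majorized_plus M a b : majorized M a -> majorized M b -> majorized M (PS_plus a b).
Proof.
  intros [A [hA ha]] [B [hB hb]]. exists (A + B). split; [lra|].
  intros i. change (Rabs (a i + b i) <= (A + B) * majorant M i).
  eapply Rle_trans; [apply Rabs_triang|]. specialize (ha i); specialize (hb i). lra.
Qed.

Lemma majorized_scal M c a : majorized M a -> majorized M (PS_scal c a).
Proof.
  intros [A [hA ha]]. exists (Rabs c * A). split; [apply Rmult_le_pos; [apply Rabs_pos | lra]|].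
  intros i. change (Rabs (c * a i) <= Rabs c * A * majorant M i).
  rewrite Rabs_mult, Rmult_assoc. apply Rmult_le_compat_l; [apply Rabs_pos | auto].
Qed.

Lemma majorized_mult M a b : 0 <= M -> majorized M a -> majorized M b -> majorized M (PS_mult a b).
Proof.
  intros hM [A [hA ha]] [B [hB hb]]. exists (8 * A * B). split; [nra|].
  intros j. apply PS_mult_abs_le; [lra | nra |]. intros i hi. rewrite Rabs_mult.
  replace (A * B * (majorant M i * majorant M (j - i)))
    with ((A * majorant M i) * (B * majorant M (j - i))) by ring.
  apply Rmult_le_compat; try apply Rabs_pos; auto.
Qed.

Ltac majorized_closure :=
  repeat first [ assumption | apply majorized_plus | apply majorized_scal | apply majorized_mult
               | lra ].

(** * Power series with majorized coefficients *)

Lemma majorized_CV_radius M a : 0 < M -> majorized M a -> Rbar_le (/ M) (CV_radius a).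
Proof.
  intros hM [A [hA ha]]. apply (proj1 (CV_radius_bounded a)). exists A. intros n.
  rewrite Rabs_mult, <- RPow_abs, Rabs_inv, (Rabs_pos_eq M), pow_inv by lra.
  assert (0 < M ^ n) by (apply pow_lt; lra).
  assert (0 <= INR n) by apply pos_INR.
  assert (hn : 1 <= (INR n + 1) ^ 2) by nra.
  apply Rle_trans with (A * majorant M n * / M ^ n).
  { apply Rmult_le_compat_r; [left; apply Rinv_0_lt_compat; lra | apply ha]. }
  unfold majorant. replace (A * (M ^ n / (INR n + 1) ^ 2) * / M ^ n) with (A / (INR n + 1) ^ 2)
    by (field; split; lra).
  apply Rmult_le_reg_r with ((INR n + 1) ^ 2); [lra|].
  unfold Rdiv. rewrite Rmult_assoc, Rinv_l by lra. nra.
Qed.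

Lemma majorized_inside M a r : 0 < M -> majorized M a -> Rabs r < / M ->
  Rbar_lt (Rabs r) (CV_radius a).
Proof. intros hM ha hr. eapply Rbar_lt_le_trans; [|apply majorized_CV_radius; eauto]. exact hr. Qed.

Lemma PSeries_plus_majorized M a b r : 0 < M -> majorized M a -> majorized M b -> Rabs r < / M ->
  PSeries (PS_plus a b) r = PSeries a r + PSeries b r.
Proof. intros. apply PSeries_plus; apply CV_radius_inside; eapply majorized_inside; eauto. Qed.

Lemma PSeries_mult_majorized M a b r : 0 < M -> majorized M a -> majorized M b -> Rabs r < / M ->
  PSeries (PS_mult a b) r = PSeries a r * PSeries b r.
Proof. intros. apply PSeries_mult; eapply majorized_inside; eauto. Qed.

Lemma is_derive_PSeries_exp M a c t : 0 < M -> majorized M a -> Rabs (c * exp t) < / M ->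
  is_derive (fun s => PSeries a (c * exp s)) t (PSeries (fun n => INR n * a n) (c * exp t)).
Proof.
  intros hM ha hr.
  assert (H1 := is_derive_PSeries a (c * exp t) (majorized_inside M a _ hM ha hr)).
  assert (H2 : is_derive (fun s => c * exp s) t (c * exp t)) by (apply is_derive_scal, is_derive_exp).
  assert (H3 := is_derive_comp (PSeries a) (fun s => c * exp s) t _ _ H1 H2).
  replace (PSeries (fun n => INR n * a n) (c * exp t))
    with (scal (c * exp t) (PSeries (PS_derive a) (c * exp t))); [exact H3|].
  change (c * exp t * PSeries (PS_derive a) (c * exp t) = PSeries (fun n => INR n * a n) (c * exp t)).
  rewrite <- PSeries_incr_1. apply PSeries_ext. intros [|n]; [change (0 = 0 * a 0%nat); ring | reflexivity].
Qed.

Lemma PSeries_geom_bound b C q r : 0 <= C -> 0 <= r -> 0 <= q -> q * r <= 1 / 2 ->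
  (forall k, Rabs (b k) <= C * q ^ k) -> Rabs (PSeries b r) <= 2 * C.
Proof.
  intros hC hr hq hqr hb.
  assert (hq1 : Rabs (q * r) < 1) by (rewrite Rabs_pos_eq; nra).
  assert (ex : ex_series (fun n => C * (q * r) ^ n))
    by exact (ex_series_scal_l C _ (ex_series_geom (q * r) hq1)).
  assert (le : forall n, 0 <= Rabs (b n * r ^ n) <= C * (q * r) ^ n).
  { intros n. split; [apply Rabs_pos|].
    rewrite Rabs_mult, <- RPow_abs, (Rabs_pos_eq r), Rpow_mult_distr, <- Rmult_assoc by lra.
    apply Rmult_le_compat_r; [apply pow_le; lra | apply hb]. }
  assert (exa : ex_series (fun n => Rabs (b n * r ^ n))).
  { apply (@ex_series_le R_AbsRing R_CompleteNormedModule _ (fun n => C * (q * r) ^ n)); [|exact ex].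
    intros n. change (Rabs (Rabs (b n * r ^ n)) <= C * (q * r) ^ n).
    rewrite Rabs_Rabsolu. apply le. }
  unfold PSeries. eapply Rle_trans; [apply Series_Rabs; exact exa|].
  eapply Rle_trans; [apply Series_le; [exact le | exact ex]|].
  rewrite Series_scal_l, Series_geom by exact hq1.
  assert (/ (1 - q * r) <= 2) by (replace 2 with (/ (1 / 2)) by field; apply Rinv_le_contravar; lra).
  nra.
Qed.

Lemma PSeries_decr_n_bound M A a n r : 0 <= M -> 0 <= A -> dominated M A a ->
  0 <= r -> M * r <= 1 / 2 -> Rabs (PSeries (PS_decr_n a n) r) <= 2 * (A * M ^ n).
Proof.
  intros hM hA ha hr hMr. apply PSeries_geom_bound with M; try lra.
  - apply Rmult_le_pos; [lra | apply pow_le; lra].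
  - intros k. change (Rabs (a (n + k)%nat) <= A * M ^ n * M ^ k).
    rewrite Rmult_assoc, <- pow_add. eapply Rle_trans; [apply ha|].
    apply Rmult_le_compat_l; [lra | apply majorant_le_pow; lra].
Qed.

Lemma PSeries_expansion M A a n r : 0 < M -> 0 <= A -> dominated M A a ->
  0 <= r -> M * r <= 1 / 2 ->
  exists s, PSeries a r = sum_f_R0 (fun k => a k * r ^ k) n + r ^ S n * s /\
            Rabs s <= 2 * (A * M ^ S n).
Proof.
  intros hM hA ha hr hMr.
  assert (hrM : Rabs r < / M).
  { rewrite Rabs_pos_eq by lra. apply (Rmult_lt_reg_l M); [lra|]. rewrite Rinv_r by lra. lra. }
  assert (hma : majorized M a) by (exists A; auto).
  exists (PSeries (PS_decr_n a (S n)) r). split.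
  - apply PSeries_decr_n, CV_radius_inside. eapply majorized_inside; eauto.
  - apply PSeries_decr_n_bound; auto; lra.
Qed.

Lemma derivable_pt_lim_eq f t l l' : derivable_pt_lim f t l -> l = l' -> derivable_pt_lim f t l'.
Proof. intros h <-. exact h. Qed.

Lemma ratio_sq_approx u w g : Rabs u <= 1 / 2 ->
  Rabs ((g - w) / (1 + u) ^ 2 - g) <= 4 * (Rabs w + 3 * Rabs g * Rabs u).
Proof.
  intros hu.
  assert (hu' : -1/2 <= u <= 1/2) by (unfold Rabs in hu; destruct Rcase_abs; lra).
  assert (hD : 1/4 <= (1 + u) ^ 2) by nra.
  replace ((g - w) / (1 + u) ^ 2 - g) with ((- w - g * (2 * u + u * u)) / (1 + u) ^ 2) by (field; lra).
  unfold Rdiv. rewrite Rabs_mult, Rabs_inv, (Rabs_pos_eq ((1 + u) ^ 2)) by lra.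
  assert (hi : / (1 + u) ^ 2 <= 4) by (replace 4 with (/ (1/4)) by field; apply Rinv_le_contravar; lra).
  assert (hN : Rabs (- w - g * (2 * u + u * u)) <= Rabs w + 3 * Rabs g * Rabs u).
  { assert (Rabs (2 * u + u * u) <= 3 * Rabs u).
    { eapply Rle_trans; [apply Rabs_triang|]. rewrite !Rabs_mult, (Rabs_pos_eq 2) by lra.
      assert (0 <= Rabs u) by apply Rabs_pos. nra. }
    unfold Rminus. eapply Rle_trans; [apply Rabs_triang|]. rewrite !Rabs_Ropp, Rabs_mult.
    assert (0 <= Rabs g) by apply Rabs_pos. nra. }
  assert (0 <= Rabs (- w - g * (2 * u + u * u))) by apply Rabs_pos.
  assert (0 <= / (1 + u) ^ 2) by (left; apply Rinv_0_lt_compat; lra).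
  nra.
Qed.

Lemma sqrt_sum3_le a b e : sqrt (a ^ 2 + b ^ 2 + e ^ 2) <= Rabs a + Rabs b + Rabs e.
Proof.
  assert (ha := Rabs_pos a). assert (hb := Rabs_pos b). assert (he := Rabs_pos e).
  rewrite <- (sqrt_pow2 (Rabs a + Rabs b + Rabs e)) by lra.
  apply sqrt_le_1_alt. rewrite <- (pow2_abs a), <- (pow2_abs b), <- (pow2_abs e). nra.
Qed.

Lemma limit_of_exp_bound (f : R -> R) (l C T0 : R) :
  (forall t, t < T0 -> Rabs (f t - l) <= C * exp t) -> limit_at_minus_infty f l.
Proof.
  intros hf eps heps.
  set (C' := Rabs C + 1).
  assert (hC' : 0 < C') by (unfold C'; assert (h := Rabs_pos C); lra).
  exists (Rmin (T0 - 1) (ln (eps / (2 * C')))). intros t ht.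
  assert (t1 : t < T0) by (assert (h := Rmin_l (T0 - 1) (ln (eps / (2 * C')))); lra).
  assert (t2 : t <= ln (eps / (2 * C'))) by (eapply Rle_trans; [exact ht | apply Rmin_r]).
  assert (he : exp t <= eps / (2 * C')).
  { rewrite <- (exp_ln (eps / (2 * C'))) by (apply Rdiv_lt_0_compat; lra).
    destruct t2 as [t2 | ->]; [left; apply exp_increasing; exact t2 | lra]. }
  assert (hpos := exp_pos t).
  assert (C * exp t <= C' * exp t) by (unfold C'; assert (h := Rle_abs C); nra).
  assert (C' * exp t <= C' * (eps / (2 * C'))) by (apply Rmult_le_compat_l; lra).
  replace (C' * (eps / (2 * C'))) with (eps / 2) in * by (field; lra).
  specialize (hf t t1). lra.
Qed.

(* With [Z = 1 + z] and [Q = dd X^2 + z^2] the system reads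
     [X' = X (Q + 2 z) + c2 Y^2 - c3 W^2],   [Y' = Y + Y (Q + 2 z - X)],
     [z' = 2 z + Q + 2 z^2 + z Q + a3 W^2],   [W' = 2 W + W (Q + 3 z - 2 X)];
   below are the coefficient sequences of the nonlinear parts. *)
Section Nonlinearity.

Variables dd c2 c3 a3 : R.

Definition NQ (X Z : nat -> R) : nat -> R := PS_plus (PS_scal dd (PS_mult X X)) (PS_mult Z Z).

Definition NX (X Y Z W : nat -> R) : nat -> R :=
  PS_plus (PS_mult X (PS_plus (NQ X Z) (PS_scal 2 Z)))
          (PS_plus (PS_scal c2 (PS_mult Y Y)) (PS_scal (- c3) (PS_mult W W))).

Definition NY (X Y Z : nat -> R) : nat -> R :=
  PS_mult Y (PS_plus (PS_plus (NQ X Z) (PS_scal 2 Z)) (PS_scal (-1) X)).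

Definition NZ (X Z W : nat -> R) : nat -> R :=
  PS_plus (PS_plus (NQ X Z) (PS_scal 2 (PS_mult Z Z)))
          (PS_plus (PS_mult Z (NQ X Z)) (PS_scal a3 (PS_mult W W))).

Definition NW (X Z W : nat -> R) : nat -> R :=
  PS_mult W (PS_plus (PS_plus (NQ X Z) (PS_scal 3 Z)) (PS_scal (-2) X)).

Ltac order_closure :=
  repeat first [ assumption | apply has_order_plus | apply has_order_scal
               | apply (has_order_mult 1 1); [lia | |] ].

Lemma N_order2 X Y Z W :
  has_order 1 X -> has_order 1 Y -> has_order 1 Z -> has_order 1 W ->
  has_order 2 (NX X Y Z W) /\ has_order 2 (NY X Y Z) /\
  has_order 2 (NZ X Z W) /\ has_order 2 (NW X Z W).
Proof.
  intros hX hY hZ hW.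
  assert (hQ : has_order 2 (NQ X Z)) by (unfold NQ; order_closure).
  assert (hQ1 : has_order 1 (NQ X Z)) by (apply (has_order_le 1 2); try lia; auto).
  unfold NX, NY, NZ, NW. repeat split; order_closure.
Qed.

Lemma N_order3 X Z W :
  has_order 2 X -> has_order 2 Z -> has_order 2 W ->
  has_order 3 (NZ X Z W) /\ has_order 3 (NW X Z W).
Proof.
  intros hX hZ hW.
  assert (h1 : forall a, has_order 2 a -> has_order 1 a) by (intros; apply (has_order_le 1 2); try lia; auto).
  assert (hsq : forall a b, has_order 2 a -> has_order 2 b -> has_order 3 (PS_mult a b))
    by (intros; apply (has_order_mult 2 2); try lia; auto).
  assert (hQ : has_order 3 (NQ X Z)) by (unfold NQ; apply has_order_plus; [apply has_order_scal|]; auto).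
  assert (hQ1 : has_order 1 (NQ X Z)) by (apply (has_order_le 1 3); try lia; auto).
  split.
  - apply has_order_plus; apply has_order_plus;
      [exact hQ | apply has_order_scal; auto | apply (has_order_mult 2 1); try lia; auto
      | apply has_order_scal; auto].
  - apply (has_order_mult 2 1); try lia; auto.
    apply has_order_plus; [apply has_order_plus|]; try apply has_order_scal; auto.
Qed.

Lemma N_agree k X Y Z W X' Y' Z' W' :
  has_order 1 X -> has_order 1 Y -> has_order 1 Z -> has_order 1 W ->
  has_order 1 X' -> has_order 1 Y' -> has_order 1 Z' -> has_order 1 W' ->
  agree_below k X X' -> agree_below k Y Y' -> agree_below k Z Z' -> agree_below k W W' ->
  NX X Y Z W k = NX X' Y' Z' W' k /\ NY X Y Z k = NY X' Y' Z' k /\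
  NZ X Z W k = NZ X' Z' W' k /\ NW X Z W k = NW X' Z' W' k.
Proof.
  intros oX oY oZ oW oX' oY' oZ' oW' eX eY eZ eW.
  assert (eQ : agree_below (S k) (NQ X Z) (NQ X' Z'))
    by (unfold NQ; apply agree_below_plus; [apply agree_below_scal|]; apply agree_below_mult; auto).
  assert (eQ' : agree_below k (NQ X Z) (NQ X' Z')) by (apply (agree_below_le (S k)); auto).
  assert (oQ : has_order 1 (NQ X Z)) by (unfold NQ; order_closure).
  assert (oQ' : has_order 1 (NQ X' Z')) by (unfold NQ; order_closure).
  enough (agree_below (S k) (NX X Y Z W) (NX X' Y' Z' W') /\ agree_below (S k) (NY X Y Z) (NY X' Y' Z') /\
          agree_below (S k) (NZ X Z W) (NZ X' Z' W') /\ agree_below (S k) (NW X Z W) (NW X' Z' W'))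
    as (h1 & h2 & h3 & h4) by (repeat split; [apply h1 | apply h2 | apply h3 | apply h4]; lia).
  unfold NX, NY, NZ, NW.
  repeat split;
    repeat first [ assumption | apply agree_below_plus | apply agree_below_scal
                 | apply agree_below_mult | progress order_closure ].
Qed.

Definition N_const : R := 72 * (Rabs dd + 1) + 40 + 8 * (Rabs c2 + Rabs c3 + Rabs a3).

Lemma NQ_dominated M k al X Z : 0 <= M -> 0 <= al ->
  has_order 1 X -> has_order 1 Z -> dominated_below M k al X -> dominated_below M k al Z ->
  dominated_below M (S k) (8 * (Rabs dd + 1) * al ^ 2) (NQ X Z).
Proof.
  intros hM hal oX oZ bX bZ.
  apply (dominated_below_weaken M (S k) (S k) (Rabs dd * (8 * al * al) + 8 * al * al)); auto.
  - right. ring.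
  - unfold NQ. apply dominated_below_plus; [apply dominated_below_scal|];
      apply dominated_below_mult; auto.
Qed.

Lemma N_dominated M k al X Y Z W : 0 <= M -> 0 <= al <= 1 ->
  has_order 1 X -> has_order 1 Y -> has_order 1 Z -> has_order 1 W ->
  dominated_below M k al X -> dominated_below M k al Y ->
  dominated_below M k al Z -> dominated_below M k al W ->
  Rabs (NX X Y Z W k) <= al ^ 2 * N_const * majorant M k /\
  Rabs (NY X Y Z k) <= al ^ 2 * N_const * majorant M k /\
  Rabs (NZ X Z W k) <= al ^ 2 * N_const * majorant M k /\
  Rabs (NW X Z W k) <= al ^ 2 * N_const * majorant M k.
Proof.
  intros hM hal oX oY oZ oW bX bY bZ bW.
  assert (hdd := Rabs_pos dd). assert (hc2 := Rabs_pos c2).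
  assert (hc3 := Rabs_pos c3). assert (ha3 := Rabs_pos a3).
  set (CQ := 8 * (Rabs dd + 1) * al ^ 2).
  assert (oQ : has_order 1 (NQ X Z)) by (unfold NQ; order_closure).
  assert (bQ : dominated_below M (S k) CQ (NQ X Z)) by (apply NQ_dominated; auto; lra).
  assert (bQ' : dominated_below M k CQ (NQ X Z))
    by (apply (dominated_below_weaken M (S k) k CQ); auto; lra).
  assert (hCQ : 0 <= CQ) by (unfold CQ; nra).
  assert (hcube : al * al * al * (Rabs dd + 1) <= al * al * (Rabs dd + 1))
    by (apply Rmult_le_compat_r; [lra|]; rewrite <- (Rmult_1_r (al * al)) at 2;
        apply Rmult_le_compat_l; nra).
  assert (hsq : 0 <= al * al) by nra.
  assert (r2 : Rabs 2 = 2) by (apply Rabs_pos_eq; lra).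
  assert (r3 : Rabs 3 = 3) by (apply Rabs_pos_eq; lra).
  assert (rm1 : Rabs (-1) = 1) by (rewrite Rabs_left; lra).
  assert (rm2 : Rabs (-2) = 2) by (rewrite Rabs_left; lra).
  repeat split.
  - apply (dominated_below_last M k
      (8 * al * (CQ + Rabs 2 * al) + (Rabs c2 * (8 * al * al) + Rabs (- c3) * (8 * al * al)))); auto.
    + unfold NX. apply dominated_below_plus; [apply dominated_below_mult; auto; try nra|].
      * order_closure.
      * apply dominated_below_plus; [|apply dominated_below_scal]; auto.
      * apply dominated_below_plus; apply dominated_below_scal, dominated_below_mult; auto; lra.
    + rewrite r2, Rabs_Ropp. unfold CQ, N_const. nra.
  - apply (dominated_below_last M k (8 * al * (CQ + Rabs 2 * al + Rabs (-1) * al))); auto.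
    + unfold NY. apply dominated_below_mult; auto; try nra; [order_closure|].
      apply dominated_below_plus; [apply dominated_below_plus|]; try apply dominated_below_scal; auto.
    + rewrite r2, rm1. unfold CQ, N_const. nra.
  - apply (dominated_below_last M k
      ((CQ + Rabs 2 * (8 * al * al)) + (8 * al * CQ + Rabs a3 * (8 * al * al)))); auto.
    + unfold NZ. apply dominated_below_plus; apply dominated_below_plus; auto;
        try apply dominated_below_scal; apply dominated_below_mult; auto; lra.
    + rewrite r2. unfold CQ, N_const. nra.
  - apply (dominated_below_last M k (8 * al * (CQ + Rabs 3 * al + Rabs (-2) * al))); auto.
    + unfold NW. apply dominated_below_mult; auto; try nra; [order_closure|].
      apply dominated_below_plus; [apply dominated_below_plus|]; try apply dominated_below_scal; auto.
    + rewrite r3, rm2. unfold CQ, N_const. nra.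
Qed.

Lemma N_eval M r X Y Z W : 0 < M -> Rabs r < / M ->
  majorized M X -> majorized M Y -> majorized M Z -> majorized M W ->
  let x := PSeries X r in let y := PSeries Y r in
  let z := PSeries Z r in let w := PSeries W r in
  let q := dd * x ^ 2 + z ^ 2 in
  PSeries (NX X Y Z W) r = x * (q + 2 * z) + c2 * y ^ 2 - c3 * w ^ 2 /\
  PSeries (NY X Y Z) r = y * (q + 2 * z - x) /\
  PSeries (NZ X Z W) r = q + 2 * z ^ 2 + z * q + a3 * w ^ 2 /\
  PSeries (NW X Z W) r = w * (q + 3 * z - 2 * x).
Proof.
  intros hM hr mX mY mZ mW x y z w q.
  unfold NX, NY, NZ, NW, NQ.
  repeat split;
    repeat first
      [ rewrite (PSeries_plus_majorized M) by majorized_closure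
      | rewrite (PSeries_mult_majorized M) by majorized_closure
      | rewrite PSeries_scal ];
    unfold q, x, y, z, w; ring.
Qed.

End Nonlinearity.

Section CourseOfValues.

Variables (A : Type) (a0 : A) (F : (nat -> A) -> nat -> A).

Hypothesis F_causal : forall f g k, f 0%nat = a0 -> g 0%nat = a0 ->
  (forall i, (i < k)%nat -> f i = g i) -> F f k = F g k.

Fixpoint cov_table (n : nat) : nat -> A :=
  match n with
  | O => fun _ => a0
  | S m => fun i => if Nat.eqb i (S m) then F (cov_table m) (S m) else cov_table m i
  end.

Definition cov_rec (k : nat) : A := cov_table k k.

Lemma cov_table_eq n i : (i <= n)%nat -> cov_table n i = cov_rec i.
Proof.
  induction n as [|n IH]; intros hi.
  - assert (i = 0%nat) as -> by lia. reflexivity.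
  - simpl. destruct (Nat.eqb_spec i (S n)) as [->|ne].
    + unfold cov_rec. simpl. rewrite Nat.eqb_refl. reflexivity.
    + apply IH. lia.
Qed.

Lemma cov_rec_eq k : (0 < k)%nat -> cov_rec k = F cov_rec k.
Proof.
  intros hk. destruct k as [|m]; [lia|].
  unfold cov_rec at 1. simpl. rewrite Nat.eqb_refl.
  apply F_causal; [apply cov_table_eq; lia | reflexivity |].
  intros i hi. apply cov_table_eq. lia.
Qed.

End CourseOfValues.

Arguments cov_rec {A} a0 F k.

Lemma Rabs_INR_sub_ge1 (k m : nat) : k <> m -> 1 <= Rabs (INR k - INR m).
Proof.
  intros hkm. destruct (Nat.lt_total k m) as [h | [h | h]]; [| lia |].
  - apply (le_INR (S k)) in h. rewrite S_INR in h.
    rewrite Rabs_left by lra. lra.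
  - apply (le_INR (S m)) in h. rewrite S_INR in h.
    rewrite Rabs_pos_eq by lra. lra.
Qed.

Lemma INR_sub_neq0 (k m : nat) : k <> m -> INR k - INR m <> 0.
Proof. intros hkm h. assert (h1 := Rabs_INR_sub_ge1 k m hkm). rewrite h, Rabs_R0 in h1. lra. Qed.

Lemma Rabs_div_le (N D : R) : 1 <= Rabs D -> Rabs (N / D) <= Rabs N.
Proof.
  intros hD. unfold Rdiv. rewrite Rabs_mult, Rabs_inv.
  assert (/ Rabs D <= 1) by (rewrite <- Rinv_1; apply Rinv_le_contravar; lra).
  assert (0 <= Rabs N) by apply Rabs_pos. assert (0 < / Rabs D) by (apply Rinv_0_lt_compat; lra).
  nra.
Qed.

Record coeffs : Type := Coeffs { cfX : R; cfY : R; cfZ : R; cfW : R }.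

Section Coefficients.

Variables dd c2 c3 a3 g : R.

Definition coef_step (f : nat -> coeffs) (k : nat) : coeffs :=
  let X := fun i => cfX (f i) in let Y := fun i => cfY (f i) in
  let Z := fun i => cfZ (f i) in let W := fun i => cfW (f i) in
  Coeffs (NX dd c2 c3 X Y Z W k / INR k)
         (if Nat.eqb k 1 then 1 else NY dd X Y Z k / (INR k - 1))
         (if Nat.eqb k 2 then - g else NZ dd a3 X Z W k / (INR k - 2))
         (if Nat.eqb k 2 then 1 else NW dd X Z W k / (INR k - 2)).

Definition coefs : nat -> coeffs := cov_rec (Coeffs 0 0 0 0) coef_step.

Definition cX (k : nat) : R := cfX (coefs k).
Definition cY (k : nat) : R := cfY (coefs k).
Definition cZ (k : nat) : R := cfZ (coefs k).
Definition cW (k : nat) : R := cfW (coefs k).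

Lemma coef_step_causal f f' k : f 0%nat = Coeffs 0 0 0 0 -> f' 0%nat = Coeffs 0 0 0 0 ->
  (forall i, (i < k)%nat -> f i = f' i) -> coef_step f k = coef_step f' k.
Proof.
  intros f0 f'0 hf.
  assert (o : forall (h : nat -> coeffs) (p : coeffs -> R), h 0%nat = Coeffs 0 0 0 0 ->
                p (Coeffs 0 0 0 0) = 0 -> has_order 1 (fun i => p (h i))).
  { intros h p h0 p0 i hi. replace i with 0%nat by lia. rewrite h0. exact p0. }
  assert (e : forall p : coeffs -> R, agree_below k (fun i => p (f i)) (fun i => p (f' i)))
    by (intros p i hi; rewrite hf; auto).
  destruct (N_agree dd c2 c3 a3 k
              (fun i => cfX (f i)) (fun i => cfY (f i)) (fun i => cfZ (f i)) (fun i => cfW (f i))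
              (fun i => cfX (f' i)) (fun i => cfY (f' i)) (fun i => cfZ (f' i)) (fun i => cfW (f' i)))
    as (hX & hY & hZ & hW); auto.
  unfold coef_step. rewrite hX, hY, hZ, hW. reflexivity.
Qed.

Lemma coefs_eq k : (0 < k)%nat -> coefs k = coef_step coefs k.
Proof. apply cov_rec_eq. exact coef_step_causal. Qed.

Lemma coefs_rec k : (0 < k)%nat ->
  cX k = NX dd c2 c3 cX cY cZ cW k / INR k /\
  cY k = (if Nat.eqb k 1 then 1 else NY dd cX cY cZ k / (INR k - 1)) /\
  cZ k = (if Nat.eqb k 2 then - g else NZ dd a3 cX cZ cW k / (INR k - 2)) /\
  cW k = (if Nat.eqb k 2 then 1 else NW dd cX cZ cW k / (INR k - 2)).
Proof.
  intros hk. pose proof (coefs_eq k hk) as e.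
  repeat split; [exact (f_equal cfX e) | exact (f_equal cfY e) | exact (f_equal cfZ e)
                | exact (f_equal cfW e)].
Qed.

Lemma coefs_order1 : has_order 1 cX /\ has_order 1 cY /\ has_order 1 cZ /\ has_order 1 cW.
Proof. repeat split; intros i hi; replace i with 0%nat by lia; reflexivity. Qed.

Lemma N_coefs_order2 :
  has_order 2 (NX dd c2 c3 cX cY cZ cW) /\ has_order 2 (NY dd cX cY cZ) /\
  has_order 2 (NZ dd a3 cX cZ cW) /\ has_order 2 (NW dd cX cZ cW).
Proof. destruct coefs_order1 as (? & ? & ? & ?). apply N_order2; auto. Qed.

Lemma coefs_1 : cX 1 = 0 /\ cY 1 = 1 /\ cZ 1 = 0 /\ cW 1 = 0.
Proof.
  destruct N_coefs_order2 as (nX & _ & nZ & nW).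
  destruct (coefs_rec 1 ltac:(lia)) as (x1 & y1 & z1 & w1). simpl Nat.eqb in *.
  rewrite x1, y1, z1, w1, nX, nZ, nW by lia. repeat split; simpl; field; lra.
Qed.

Lemma coefs_order2 : has_order 2 cX /\ has_order 2 cZ /\ has_order 2 cW.
Proof.
  destruct coefs_order1 as (oX & _ & oZ & oW). destruct coefs_1 as (x1 & _ & z1 & w1).
  repeat split; intros i hi; destruct (Nat.eq_dec i 0) as [->|]; auto;
    replace i with 1%nat by lia; assumption.
Qed.

Lemma coefs_2 : cZ 2 = - g /\ cW 2 = 1.
Proof. destruct (coefs_rec 2 ltac:(lia)) as (_ & _ & z2 & w2). auto. Qed.

Lemma coefs_euler :
  (forall k, INR k * cX k = NX dd c2 c3 cX cY cZ cW k) /\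
  (forall k, INR k * cY k = cY k + NY dd cX cY cZ k) /\
  (forall k, INR k * cZ k = 2 * cZ k + NZ dd a3 cX cZ cW k) /\
  (forall k, INR k * cW k = 2 * cW k + NW dd cX cZ cW k).
Proof.
  enough (H : forall k,
    INR k * cX k = NX dd c2 c3 cX cY cZ cW k /\ INR k * cY k = cY k + NY dd cX cY cZ k /\
    INR k * cZ k = 2 * cZ k + NZ dd a3 cX cZ cW k /\ INR k * cW k = 2 * cW k + NW dd cX cZ cW k)
    by (repeat split; intros k; apply H).
  intros k.
  destruct coefs_order1 as (oX & oY & oZ & oW).
  destruct N_coefs_order2 as (nX & nY & nZ & nW).
  destruct (Nat.eq_dec k 0) as [->|k0].
  { rewrite oX, oY, oZ, oW, nX, nY, nZ, nW by lia. simpl. repeat split; ring. }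
  destruct (coefs_rec k ltac:(lia)) as (eX & eY & eZ & eW).
  assert (ek : 1 <= INR k) by (apply (le_INR 1); lia).
  repeat split.
  - rewrite eX. field. lra.
  - destruct (Nat.eqb_spec k 1) as [->|k1].
    + rewrite eY, nY by lia. simpl. ring.
    + assert (2 <= INR k) by (apply (le_INR 2); lia). rewrite eY. field. lra.
  - destruct (Nat.eqb_spec k 2) as [->|k2].
    + destruct coefs_order2 as (pX & pZ & pW).
      rewrite (proj1 (N_order3 dd a3 cX cZ cW pX pZ pW)) by lia. simpl. ring.
    + rewrite eZ. field. exact (INR_sub_neq0 k 2 k2).
  - destruct (Nat.eqb_spec k 2) as [->|k2].
    + destruct coefs_order2 as (pX & pZ & pW).
      rewrite (proj2 (N_order3 dd a3 cX cZ cW pX pZ pW)) by lia. simpl. ring.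
    + rewrite eW. field. exact (INR_sub_neq0 k 2 k2).
Qed.

(* [coef_scale ^ 2 * N_const = coef_scale] closes the induction of [coefs_bound_at]; the factor
   [9 * (1 + |g|)] in [coef_ratio] makes the free data [Y_1], [Z_2], [W_2] fit under the majorant. *)
Definition coef_scale : R := / N_const dd c2 c3 a3.

Definition coef_ratio : R := 9 * (1 + Rabs g) * N_const dd c2 c3 a3.

Lemma N_const_ge1 : 1 <= N_const dd c2 c3 a3.
Proof.
  unfold N_const. assert (h := Rabs_pos dd). assert (h2 := Rabs_pos c2).
  assert (h3 := Rabs_pos c3). assert (h4 := Rabs_pos a3). lra.
Qed.

Lemma coef_scale_bounds : 0 < coef_scale <= 1 /\ coef_scale * N_const dd c2 c3 a3 = 1.
Proof.
  assert (hK := N_const_ge1). unfold coef_scale.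
  split; [split|]; [apply Rinv_0_lt_compat; lra | | field; lra].
  rewrite <- Rinv_1. apply Rinv_le_contravar; lra.
Qed.

Lemma coef_ratio_ge9 : 9 <= coef_ratio.
Proof. assert (hK := N_const_ge1). assert (hg := Rabs_pos g). unfold coef_ratio. nra. Qed.

Lemma coef_scale_ratio : coef_scale * coef_ratio = 9 * (1 + Rabs g).
Proof.
  destruct coef_scale_bounds as [_ e]. unfold coef_ratio.
  transitivity (9 * (1 + Rabs g) * (coef_scale * N_const dd c2 c3 a3)); [ring | rewrite e; ring].
Qed.

Lemma coefs_bound_at k :
  dominated_below coef_ratio k coef_scale cX -> dominated_below coef_ratio k coef_scale cY ->
  dominated_below coef_ratio k coef_scale cZ -> dominated_below coef_ratio k coef_scale cW ->
  Rabs (cX k) <= coef_scale * majorant coef_ratio k /\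
  Rabs (cY k) <= coef_scale * majorant coef_ratio k /\
  Rabs (cZ k) <= coef_scale * majorant coef_ratio k /\
  Rabs (cW k) <= coef_scale * majorant coef_ratio k.
Proof.
  intros bX bY bZ bW.
  destruct coef_scale_bounds as [hal halK].
  assert (hM := coef_ratio_ge9). assert (hg := Rabs_pos g). assert (hsr := coef_scale_ratio).
  set (M := coef_ratio) in *. set (al := coef_scale) in *.
  assert (hmm := majorant_ge0 M k ltac:(lra)).
  destruct coefs_order1 as (oX & oY & oZ & oW).
  destruct (N_dominated dd c2 c3 a3 M k al cX cY cZ cW ltac:(lra) ltac:(lra)
              oX oY oZ oW bX bY bZ bW) as (nX & nY & nZ & nW).
  replace (al ^ 2 * N_const dd c2 c3 a3) with al in nX, nY, nZ, nW
    by (transitivity (al * (al * N_const dd c2 c3 a3)); [rewrite halK | ]; ring).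
  destruct (Nat.eq_dec k 0) as [->|k0].
  { rewrite oX, oY, oZ, oW, Rabs_R0 by lia. repeat split; nra. }
  destruct (coefs_rec k ltac:(lia)) as (eX & eY & eZ & eW).
  assert (hal1 : al * majorant M 1 = 9 * (1 + Rabs g) / 4)
    by (rewrite <- hsr; unfold majorant; simpl; field).
  assert (hal2 : al * majorant M 2 = (1 + Rabs g) * M)
    by (transitivity (al * M * M / 9); [unfold majorant; simpl; field | rewrite hsr; field]).
  repeat split.
  - rewrite eX. eapply Rle_trans; [apply Rabs_div_le | exact nX].
    rewrite Rabs_pos_eq by apply pos_INR. apply (le_INR 1). lia.
  - rewrite eY. destruct (Nat.eqb_spec k 1) as [->|k1].
    + rewrite Rabs_R1, hal1. lra.
    + eapply Rle_trans; [apply Rabs_div_le, (Rabs_INR_sub_ge1 k 1 k1) | exact nY].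
  - rewrite eZ. destruct (Nat.eqb_spec k 2) as [->|k2].
    + rewrite Rabs_Ropp, hal2. nra.
    + eapply Rle_trans; [apply Rabs_div_le, (Rabs_INR_sub_ge1 k 2 k2) | exact nZ].
  - rewrite eW. destruct (Nat.eqb_spec k 2) as [->|k2].
    + rewrite Rabs_R1, hal2. nra.
    + eapply Rle_trans; [apply Rabs_div_le, (Rabs_INR_sub_ge1 k 2 k2) | exact nW].
Qed.

Lemma coefs_dominated :
  dominated coef_ratio coef_scale cX /\ dominated coef_ratio coef_scale cY /\
  dominated coef_ratio coef_scale cZ /\ dominated coef_ratio coef_scale cW.
Proof.
  set (M := coef_ratio). set (al := coef_scale).
  assert (below : forall n, dominated_below M n al cX /\ dominated_below M n al cY /\
                            dominated_below M n al cZ /\ dominated_below M n al cW).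
  { induction n as [|k (bX & bY & bZ & bW)]; [repeat split; intros i hi; lia|].
    destruct (coefs_bound_at k bX bY bZ bW) as (hX & hY & hZ & hW).
    repeat split; apply dominated_below_S; auto. }
  repeat split; intros k; apply (below (S k)); lia.
Qed.

Lemma coefs_majorized :
  majorized coef_ratio cX /\ majorized coef_ratio cY /\
  majorized coef_ratio cZ /\ majorized coef_ratio cW.
Proof.
  destruct coef_scale_bounds as [hal _].
  destruct coefs_dominated as (dX & dY & dZ & dW).
  repeat split; exists coef_scale; split; auto; lra.
Qed.

(* [sol_rho] is small enough that for [t < 1] the relative errors [2 M^3 r] of [sol_expansion]
   stay below [1/2]. *)
Definition sol_rho : R := / (4 * coef_ratio ^ 3).

Lemma sol_rho_pos : 0 < sol_rho.
Proof. assert (h := coef_ratio_ge9). unfold sol_rho. apply Rinv_0_lt_compat. simpl. nra. Qed.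

Definition sol_param (t : R) : R := sol_rho / 3 * exp t.

Definition solX (t : R) : R := PSeries cX (sol_param t).
Definition solY (t : R) : R := PSeries cY (sol_param t).
Definition solZ (t : R) : R := 1 + PSeries cZ (sol_param t).
Definition solW (t : R) : R := PSeries cW (sol_param t).

Lemma sol_param_small t : t < 1 ->
  0 < sol_param t /\ coef_ratio * sol_param t <= 1 / 2 /\
  Rabs (sol_param t) < / coef_ratio /\ 2 * coef_ratio ^ 3 * sol_param t <= 1 / 2.
Proof.
  intros ht. assert (hM := coef_ratio_ge9).
  unfold sol_param, sol_rho. set (M := coef_ratio) in *.
  assert (hM3 : 729 <= M ^ 3) by (simpl; nra).
  assert (hM2 : M <= M ^ 3) by (simpl; nra).
  assert (he := exp_pos t).
  assert (he3 : exp t < 3) by (assert (h := exp_increasing t 1 ht); assert (h' := exp_le_3); lra).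
  set (rho := / (4 * M ^ 3)).
  assert (hrho : 4 * M ^ 3 * rho = 1) by (unfold rho; field; lra).
  assert (hr : 0 < rho / 3 * exp t < rho) by (unfold Rdiv; nra).
  rewrite Rabs_pos_eq by lra.
  repeat split; try nra.
  apply (Rmult_lt_reg_l M); [lra|]. rewrite Rinv_r by lra. nra.
Qed.

Lemma is_derive_sol a t : majorized coef_ratio a -> t < 1 ->
  is_derive (fun s => PSeries a (sol_param s)) t (PSeries (fun n => INR n * a n) (sol_param t)).
Proof.
  intros ha ht. destruct (sol_param_small t ht) as (_ & _ & hr & _).
  apply (is_derive_PSeries_exp coef_ratio); auto. assert (h := coef_ratio_ge9). lra.
Qed.

Lemma sol_derivatives t : t < 1 ->
  derivable_pt_lim solX t
    (solX t * (dd * solX t ^ 2 + solZ t ^ 2 - 1) + c2 * solY t ^ 2 - c3 * solW t ^ 2) /\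
  derivable_pt_lim solY t (solY t * (dd * solX t ^ 2 + solZ t ^ 2 - solX t)) /\
  derivable_pt_lim solZ t (solZ t * (dd * solX t ^ 2 + solZ t ^ 2 - 1) + a3 * solW t ^ 2) /\
  derivable_pt_lim solW t (solW t * (dd * solX t ^ 2 + solZ t ^ 2 - 2 * solX t + solZ t)).
Proof.
  intros ht.
  destruct coefs_majorized as (mX & mY & mZ & mW).
  destruct (sol_param_small t ht) as (_ & _ & hr & _).
  assert (hM : 0 < coef_ratio) by (assert (h := coef_ratio_ge9); lra).
  destruct (N_eval dd c2 c3 a3 coef_ratio (sol_param t) cX cY cZ cW hM hr mX mY mZ mW)
    as (eX & eY & eZ & eW).
  assert (deriv : forall a, majorized coef_ratio a -> forall b, (forall n, INR n * a n = b n) ->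
                derivable_pt_lim (fun s => PSeries a (sol_param s)) t (PSeries b (sol_param t))).
  { intros a ha b hb. apply is_derive_Reals. rewrite <- (PSeries_ext _ _ _ hb).
    exact (is_derive_sol a t ha ht). }
  destruct coefs_euler as (uX & uY & uZ & uW).
  unfold solX, solY, solZ, solW. repeat split.
  - refine (derivable_pt_lim_eq _ _ _ _ (deriv cX mX _ uX) _). rewrite eX. ring.
  - refine (derivable_pt_lim_eq _ _ _ _ (deriv cY mY (PS_plus cY (NY dd cX cY cZ)) uY) _).
    rewrite (PSeries_plus_majorized coef_ratio), eY by (unfold NY, NQ; majorized_closure). ring.
  - refine (derivable_pt_lim_eq _ _ _ _ (derivable_pt_lim_plus (fct_cte 1) _ t 0 _
              (derivable_pt_lim_const 1 t) (deriv cZ mZ (PS_plus (PS_scal 2 cZ) (NZ dd a3 cX cZ cW)) uZ)) _).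
    rewrite (PSeries_plus_majorized coef_ratio), PSeries_scal, eZ
      by (unfold NZ, NQ; majorized_closure). ring.
  - refine (derivable_pt_lim_eq _ _ _ _ (deriv cW mW (PS_plus (PS_scal 2 cW) (NW dd cX cZ cW)) uW) _).
    rewrite (PSeries_plus_majorized coef_ratio), PSeries_scal, eW
      by (unfold NW, NQ; majorized_closure). ring.
Qed.

Lemma sol_expansion t : t < 1 ->
  let r := sol_param t in let e := 2 * coef_ratio ^ 3 * r in
  exists x u z w,
    solX t = r ^ 2 * x /\ Rabs x <= 2 * coef_ratio ^ 3 /\
    solY t = r * (1 + u) /\ Rabs u <= e /\
    solZ t = 1 + r ^ 2 * (- g + z) /\ Rabs z <= e /\
    solW t = r ^ 2 * (1 + w) /\ Rabs w <= e.
Proof.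
  intros ht r e.
  destruct (sol_param_small t ht) as (hr & hMr & _ & _).
  destruct coef_scale_bounds as [hal _].
  destruct coefs_dominated as (dX & dY & dZ & dW).
  destruct coefs_order1 as (x0 & y0 & z0 & w0).
  destruct coefs_1 as (x1 & y1 & z1 & w1). destruct coefs_2 as (z2 & w2).
  assert (hM := coef_ratio_ge9). fold r in hr, hMr.
  assert (hM23 : coef_ratio ^ 2 <= coef_ratio ^ 3) by (simpl; nra).
  assert (hM3 : 0 <= coef_ratio ^ 3) by (apply pow_le; lra).
  assert (exp2 : forall a, dominated coef_ratio coef_scale a -> exists s,
             PSeries a r = a 0%nat + a 1%nat * r + r ^ 2 * s /\ Rabs s <= 2 * coef_ratio ^ 3).
  { intros a ha. destruct (PSeries_expansion coef_ratio coef_scale a 1 r) as (s & es & hs); try lra; auto.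
    exists s. split; [rewrite es; simpl; ring|]. eapply Rle_trans; [exact hs|]. simpl in *. nra. }
  assert (exp3 : forall a, dominated coef_ratio coef_scale a -> exists s,
             PSeries a r = a 0%nat + a 1%nat * r + a 2%nat * r ^ 2 + r ^ 3 * s /\
             Rabs s <= 2 * coef_ratio ^ 3).
  { intros a ha. destruct (PSeries_expansion coef_ratio coef_scale a 2 r) as (s & es & hs); try lra; auto.
    exists s. split; [rewrite es; simpl; ring|]. eapply Rle_trans; [exact hs|]. nra. }
  destruct (exp2 cX dX) as (sX & eX & bX). destruct (exp2 cY dY) as (sY & eY & bY).
  destruct (exp3 cZ dZ) as (sZ & eZ & bZ). destruct (exp3 cW dW) as (sW & eW & bW).
  rewrite x0, x1 in eX by lia. rewrite y0, y1 in eY by lia.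
  rewrite z0, z1, z2 in eZ by lia. rewrite w0, w1, w2 in eW by lia.
  exists sX, (r * sY), (r * sZ), (r * sW). unfold solX, solY, solZ, solW, e. fold r.
  rewrite eX, eY, eZ, eW, !Rabs_mult, (Rabs_pos_eq r) by lra.
  repeat split; try ring; nra.
Qed.

Lemma sol_param_exp t : exp (- t) * sol_param t = sol_rho / 3.
Proof.
  unfold sol_param. rewrite (Rmult_comm (sol_rho / 3)), <- Rmult_assoc, <- exp_plus.
  replace (- t + t) with 0 by ring. rewrite exp_0. ring.
Qed.

Lemma solY_pos t : t < 1 -> 0 < solY t.
Proof.
  intros ht. destruct (sol_expansion t ht) as (x & u & z & w & _ & _ & eY & bu & _).
  destruct (sol_param_small t ht) as (hr & _ & _ & he).
  rewrite eY. apply Rmult_lt_0_compat; [exact hr|].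
  assert (Rabs u <= 1 / 2) by lra. unfold Rabs in *. destruct Rcase_abs; lra.
Qed.

Lemma sol_XZW_bounded :
  bounded_at_minus_infty (fun t => exp (-2 * t) * sqrt (solX t ^ 2 + (solZ t - 1) ^ 2 + solW t ^ 2)).
Proof.
  exists ((sol_rho / 3) ^ 2 * (2 * coef_ratio ^ 3 + Rabs g + 2)), 0. intros t ht.
  destruct (sol_expansion t ltac:(lra)) as (x & u & z & w & eX & bx & _ & _ & eZ & bz & eW & bw).
  destruct (sol_param_small t ltac:(lra)) as (hr & _ & _ & he).
  assert (hexp : exp (-2 * t) * sol_param t ^ 2 = (sol_rho / 3) ^ 2).
  { rewrite <- (sol_param_exp t). replace (-2 * t) with (- t + - t) by ring. rewrite exp_plus. ring. }
  assert (hrho := sol_rho_pos).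
  set (r := sol_param t) in *.
  rewrite Rabs_pos_eq by (apply Rmult_le_pos; [left; apply exp_pos | apply sqrt_pos]).
  eapply Rle_trans; [apply Rmult_le_compat_l; [left; apply exp_pos | apply sqrt_sum3_le]|].
  replace (solZ t - 1) with (r ^ 2 * (- g + z)) by (rewrite eZ; ring).
  rewrite eX, eW, !Rabs_mult, !(Rabs_pos_eq (r ^ 2)) by (apply pow_le; lra).
  replace (exp (-2 * t) * (r ^ 2 * Rabs x + r ^ 2 * Rabs (- g + z) + r ^ 2 * Rabs (1 + w)))
    with (exp (-2 * t) * r ^ 2 * (Rabs x + Rabs (- g + z) + Rabs (1 + w))) by ring.
  rewrite hexp. apply Rmult_le_compat_l; [apply pow_le; lra|].
  assert (Rabs (- g + z) <= Rabs g + Rabs z) by (rewrite <- (Rabs_Ropp g); apply Rabs_triang).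
  assert (Rabs (1 + w) <= 1 + Rabs w) by (rewrite <- Rabs_R1 at 2; apply Rabs_triang).
  lra.
Qed.

Lemma solY_bounded : bounded_at_minus_infty (fun t => exp (- t) * Rabs (solY t)).
Proof.
  exists (sol_rho / 3 * (3 / 2)), 0. intros t ht.
  destruct (sol_expansion t ltac:(lra)) as (x & u & z & w & _ & _ & eY & bu & _).
  destruct (sol_param_small t ltac:(lra)) as (hr & _ & _ & he).
  rewrite Rabs_pos_eq by (apply Rmult_le_pos; [left; apply exp_pos | apply Rabs_pos]).
  rewrite eY, Rabs_mult, (Rabs_pos_eq (sol_param t)), <- Rmult_assoc, sol_param_exp by lra.
  apply Rmult_le_compat_l; [assert (h := sol_rho_pos); lra|].
  assert (Rabs (1 + u) <= 1 + Rabs u) by (rewrite <- Rabs_R1 at 2; apply Rabs_triang).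
  lra.
Qed.

Lemma sol_ratio_limits :
  limit_at_minus_infty (fun t => solW t / solY t ^ 2) 1 /\
  limit_at_minus_infty (fun t => (1 - solZ t) / solY t ^ 2) g.
Proof.
  split; apply (limit_of_exp_bound _ _ (16 * (1 + Rabs g) * (2 * coef_ratio ^ 3 * (sol_rho / 3))) 1);
    intros t ht;
    destruct (sol_expansion t ht) as (x & u & z & w & _ & _ & eY & bu & eZ & bz & eW & bw);
    destruct (sol_param_small t ht) as (hr & _ & _ & he);
    set (E := 2 * coef_ratio ^ 3 * sol_param t) in *;
    replace (16 * (1 + Rabs g) * (2 * coef_ratio ^ 3 * (sol_rho / 3)) * exp t)
      with (16 * (1 + Rabs g) * E) by (unfold E, sol_param; ring);
    assert (hu : Rabs u <= 1 / 2) by lra;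
    assert (hu' : 1 + u <> 0) by (unfold Rabs in hu; destruct Rcase_abs; lra);
    assert (hg := Rabs_pos g);
    assert (hgu : Rabs g * Rabs u <= Rabs g * E) by (apply Rmult_le_compat_l; lra);
    assert (hE : 0 <= E) by (assert (h := Rabs_pos u); lra).
  - replace (solW t / solY t ^ 2) with ((1 - - w) / (1 + u) ^ 2) by (rewrite eW, eY; field; lra).
    eapply Rle_trans; [apply ratio_sq_approx; exact hu|]. rewrite Rabs_Ropp, Rabs_R1. nra.
  - replace ((1 - solZ t) / solY t ^ 2) with ((g - z) / (1 + u) ^ 2) by (rewrite eZ, eY; field; lra).
    eapply Rle_trans; [apply ratio_sq_approx; exact hu|]. nra.
Qed.

End Coefficients.

Theorem corollary3p2 (d : nat) (q : R) (hd : (0 < d)%nat) (gamma : R) :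
  exists (T : R) (X Y Z W : R -> R),
    0 < T /\
    solves_S d q T X Y Z W /\
    (forall t, t < T -> 0 < Y t) /\
    bounded_at_minus_infty
      (fun t => exp (-2 * t) * sqrt ((X t) ^ 2 + (Z t - 1) ^ 2 + (W t) ^ 2)) /\
    bounded_at_minus_infty (fun t => exp (- t) * Rabs (Y t)) /\
    limit_at_minus_infty (fun t => W t / (Y t) ^ 2) 1 /\
    limit_at_minus_infty (fun t => (1 - Z t) / (Y t) ^ 2) gamma.
Proof.
  set (dd := INR d). set (c2 := A2 d / INR d). set (c3 := 2 * (A3 d q / INR d)). set (a3 := A3 d q).
  exists 1, (solX dd c2 c3 a3 gamma), (solY dd c2 c3 a3 gamma),
    (solZ dd c2 c3 a3 gamma), (solW dd c2 c3 a3 gamma).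
  destruct (sol_ratio_limits dd c2 c3 a3 gamma) as [limW limZ].
  refine (conj Rlt_0_1 (conj _ (conj _ (conj (sol_XZW_bounded dd c2 c3 a3 gamma)
            (conj (solY_bounded dd c2 c3 a3 gamma) (conj limW limZ)))))).
  - intros t ht. exact (sol_derivatives dd c2 c3 a3 gamma t ht).
  - intros t ht. exact (solY_pos dd c2 c3 a3 gamma t ht).
Qed.
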